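(* For every integer $t\ge 2$ and positive integers $d,k$ there exists an integer $m=m(t,k,d)\le k^{2^{d-1}}+t-1$ with the following property: the (unordered) $t$-tuples of every finite point set $S\subset\mathbb{R}^d$ can be $k$-colored such that every axis-parallel box in $\mathbb{R}^d$ that contains at least $m$ points of $S$ contains $t$-tuples of points of $S$ colored with each of the $k$ colors.
   Context: An axis-parallel closed halfspace in $\mathbb{R}^d$ is a set $\{\mathbf{p}\mid (\mathbf{p})_i\le\beta\}$ or $\{\mathbf{p}\mid (\mathbf{p})_i\ge\beta\}$ for some coordinate $1\le i\le d$ and real $\beta$; an axis-parallel box is an intersection of such halfspaces. A $t$-tuple of points of $S$ is a $t$-element subset of $S$; a box contains it if it contains all its points. *)

From HB Require Import structures.
From mathcomp Require Import all_boot all_order all_algebra.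
From mathcomp Require Import finmap.
From mathcomp Require Import reals.
Set Implicit Arguments. Unset Strict Implicit. Unset Printing Implicit Defensive.
Import Order.TTheory GRing.Theory Num.Theory.
Local Open Scope ring_scope.

(* Points of R^d are row vectors 'rV[R]_d; coordinate i of p is p 0 i. *)

Definition halfspace {R : realType} {d : nat} (h : 'I_d * R * bool)
  (p : 'rV[R]_d) : bool :=
  let: (i, beta, upper) := h in
  if upper then p 0 i <= beta else beta <= p 0 i.

(* An axis-parallel box: the intersection of a (finite) list of axis-parallel
   closed halfspaces. *)
Definition in_box {R : realType} {d : nat} (H : seq ('I_d * R * bool))
  (p : 'rV[R]_d) : bool :=
  all (fun h => halfspace h p) H.

Definition box_points {R : realType} {d : nat} (H : seq ('I_d * R * bool))
  (S : {fset 'rV[R]_d}) : {fset 'rV[R]_d} :=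
  [fset p in S | in_box H p]%fset.

From HB Require Import structures.
From mathcomp Require Import all_boot all_order all_algebra finmap reals zify.
Import Order.TTheory GRing.Theory Num.Theory.
Set Implicit Arguments. Unset Strict Implicit. Unset Printing Implicit Defensive.

(* Points are compared along coordinate 0 and, for each of the 2^(d-1) sign
   vectors s, by the orthant order in which coordinate 0 increases and every
   other coordinate moves in the direction prescribed by s; any two distinct
   points are comparable in exactly one orthant order.  A t-tuple is coloured
   by its two lowest points p, x (along coordinate 0): if x has height h above
   p in the orthant order of (p, x), the colour is h - 2 modulo k.
   In a box with at least k^(2^(d-1)) + t - 1 points, set aside the t - 2
   highest ones.  The remaining more than k^(2^(d-1)) points contain, by the
   pigeonhole form of Mirsky's theorem applied to the orthant orders, a chain
   p < ... < y of k + 1 points in one orthant order.  Heights above p then take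
   every value from 2 to k + 1 on points z <= y, which lie in the box because
   boxes are convex for orthant orders; {p, z} together with the set-aside
   points is a t-tuple of any prescribed colour. *)

Lemma sub_count_lt (T : eqType) (a b : pred T) (s : seq T) y :
  subpred a b -> y \in s -> b y -> ~~ a y -> count a s < count b s.
Proof.
move=> ab; elim: s => //= z s IH; rewrite inE => /predU1P[<-|ys] By Ny.
  by rewrite By (negbTE Ny) add0n add1n ltnS sub_count.
rewrite -addnS leq_add ?IH //.
by case: (a z) (ab z) => // ->.
Qed.

Lemma bigmax_seq_witness (I : eqType) (r : seq I) (P : pred I) (F : I -> nat) :
  0 < \max_(i <- r | P i) F i ->
  exists2 i, (i \in r) && P i & F i = \max_(i <- r | P i) F i.
Proof.
rewrite big_seq_cond.
elim/big_ind: _ => [//| m1 m2 IH1 IH2 | i iP _]; last by exists i.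
by case: (leqP m1 m2) => _; [exact: IH2 | exact: IH1].
Qed.

Section Height.
Variables (T : eqType) (lt : rel T) (A : seq T).
Hypotheses (lt_irr : irreflexive lt) (lt_trans : transitive lt).

Fixpoint height_upto (fuel : nat) (x : T) : nat :=
  if fuel is fuel'.+1 then (\max_(y <- A | lt y x) height_upto fuel' y).+1 else 0.

(* The number of elements of a longest lt-chain of A ending at x; the fuel
   exceeds the number of elements of A below x, whence [heightE]. *)
Definition height (x : T) : nat := height_upto (size A).+1 x.

Lemma count_below_lt x y :
  y \in A -> lt y x -> count (lt^~ y) A < count (lt^~ x) A.
Proof.
move=> yA lyx; apply: (sub_count_lt _ yA lyx); last by rewrite /= lt_irr.
by move=> z /= lzy; apply: lt_trans lzy lyx.
Qed.

Lemma height_upto_stable fuel1 fuel2 x :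
  count (lt^~ x) A < fuel1 -> count (lt^~ x) A < fuel2 ->
  height_upto fuel1 x = height_upto fuel2 x.
Proof.
elim: fuel1 fuel2 x => [|f1 IH] [|f2] x //= h1 h2; congr S.
rewrite big_seq_cond [RHS]big_seq_cond; apply: eq_bigr => y /andP[yA lyx].
have := count_below_lt yA lyx; move: h1 h2; rewrite !ltnS => h1 h2 hy.
by apply: IH; lia.
Qed.

Lemma heightE x : height x = (\max_(y <- A | lt y x) height y).+1.
Proof.
rewrite [LHS]/height /=; congr S.
rewrite big_seq_cond [RHS]big_seq_cond; apply: eq_bigr => y /andP[yA lyx].
have := count_below_lt yA lyx; have := count_size (lt^~ x) A.
by move=> hx hy; apply: height_upto_stable; lia.
Qed.

Lemma height_gt0 x : 0 < height x.
Proof. by rewrite heightE. Qed.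

Lemma height_lt x y : x \in A -> lt x y -> height x < height y.
Proof. by move=> xA lxy; rewrite [height y]heightE ltnS (leq_bigmax_seq x). Qed.

Lemma height_min x : {in A, forall y, ~~ lt y x} -> height x = 1.
Proof.
move=> minx; rewrite heightE big_seq_cond big_pred0 // => y.
by apply/negbTE/nandP; case: (boolP (y \in A)) => [/minx|]; auto.
Qed.

Lemma height_pred y : 1 < height y ->
  exists2 x, (x \in A) && lt x y & (height x).+1 = height y.
Proof.
by rewrite [height y]heightE ltnS => /bigmax_seq_witness[x xAy <-]; exists x.
Qed.

Lemma height_chain n y : height y = n.+1 ->
  exists c, [/\ path [rel a b | lt b a] y c, {subset c <= A} & size c = n].
Proof.
elim: n y => [|n IH] y hy; first by exists [::].
have [|x /andP[xA lxy]] := height_pred (y := y); first by rewrite hy.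
rewrite hy => /succn_inj/IH[c [pc cA sc]].
exists (x :: c); split => //=; first by rewrite lxy.
  by move=> z /predU1P[->|/cA].
by rewrite sc.
Qed.

Lemma height_down v y : 0 < v -> v <= height y ->
  exists2 z, height z = v & (z == y) || (z \in A) && lt z y.
Proof.
move=> v0 /subnKC; move: (height y - v) => j; elim: j y => [|j IH] y hy.
  by exists y; rewrite ?eqxx // -hy addn0.
have [|x /andP[xA lxy]] := height_pred (y := y); first by rewrite -hy; lia.
rewrite -hy addnS => /succn_inj/esym/IH[z hz zx]; exists z => //.
case/predU1P: zx => [->|/andP[zA lzx]]; first by rewrite xA lxy orbT.
by rewrite zA (lt_trans lzx lxy) orbT.
Qed.

Lemma height_path x c : path lt x c -> {subset x :: c <= A} ->
  height x + size c <= height (last x c).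
Proof.
elim: c x => [|y c IH] x /=; first by rewrite addn0.
move=> /andP[lxy pc] xcA.
have yA : {subset y :: c <= A} by move=> z zc; apply: xcA; rewrite inE zc orbT.
have := IH y pc yA; have := height_lt (xcA x (mem_head _ _)) lxy; lia.
Qed.

End Height.

Lemma pigeonhole_level (T : eqType) (f : T -> nat) (K n : nat) (s : seq T) :
  {in s, forall x, 0 < f x <= n} -> n * K < size s ->
  exists v, K < count (fun x => f x == v) s.
Proof.
elim: n s => [|n IH] s fs big.
  by case: s fs big => [|x s] // /(_ x (mem_head _ _)) /andP[]; lia.
have [lowK|] := leqP (count (fun x => f x == n.+1) s) K; last by exists n.+1.
have [||v hv] := IH [seq x <- s | f x != n.+1].
- by move=> x; rewrite mem_filter => /andP[/eqP fxn /fs /andP[]]; lia.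
- have -> : size [seq x <- s | f x != n.+1] = size s - count (fun x => f x == n.+1) s.
    by rewrite size_filter -(count_predC (fun x => f x == n.+1) s) addKn.
  lia.
exists v; apply: leq_trans hv _.
by rewrite count_filter; apply: sub_count => x /andP[].
Qed.

Lemma exists_long_chain (T : eqType) (I : Type) (lt : I -> rel T) (k : nat)
    (os : seq I) (B : seq T) :
  (forall o, irreflexive (lt o)) -> (forall o, transitive (lt o)) -> uniq B ->
  {in B &, forall x y, x != y -> has (fun o => lt o x y || lt o y x) os} ->
  k ^ size os < size B ->
  exists o c, [/\ sorted (lt o) c, {subset c <= B} & k < size c].
Proof.
move=> irr tr; elim: os B => [|o os IH] B uB cmp big.
  case: B uB cmp big => [|x [|y B]] // /andP[xnB _] cmp _.
  have xy : x != y by apply: contraNneq xnB => ->; rewrite mem_head.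
  have yB : y \in [:: x, y & B] by rewrite !inE eqxx orbT.
  by have := cmp x y (mem_head _ _) yB xy.
pose h := height (lt o) B.
have [/hasP[y yB hy]|/hasPn lowh] := boolP (has (fun x => k < h x) B).
  have hy0 := height_gt0 B (irr o) (tr o) y.
  have [c [pc cB sc]] := height_chain (irr o) (tr o) (esym (prednK hy0)).
  exists o, (rev (y :: c)); split; first by rewrite rev_sorted.
    by move=> z; rewrite mem_rev inE => /predU1P[->|/cB].
  by rewrite size_rev /= sc prednK.
have [v hv] : exists v, k ^ size os < count (fun x => h x == v) B.
  apply: (pigeonhole_level (n := k)); last by rewrite -expnS.
  by move=> x xB; rewrite height_gt0 //= leqNgt lowh.
have cmpv : {in [seq x <- B | h x == v] &, forall x y, x != y ->
    has (fun o => lt o x y || lt o y x) os}.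
  move=> x y; rewrite !mem_filter => /andP[/eqP hx xB] /andP[/eqP hy yB] xy.
  have /orP[/orP[l|l]|//] := cmp x y xB yB xy.
    by have := height_lt (irr o) (tr o) xB l; rewrite -/h hx hy ltnn.
  by have := height_lt (irr o) (tr o) yB l; rewrite -/h hx hy ltnn.
have [|o' [c [sc cB kc]]] := IH _ (filter_uniq _ uB) cmpv.
  by rewrite size_filter.
by exists o', c; split=> // z /cB; rewrite mem_filter => /andP[].
Qed.

Section CoordinateOrders.
Variables (R : realType) (d : nat).
Local Open Scope ring_scope.
Implicit Types (x y z : 'rV[R]_d) (i : 'I_d).

(* Coordinate i first, ties broken lexicographically: a total order on points. *)
Definition coord_key i x : seqlexi R := x 0 i :: [seq x 0 j | j <- enum 'I_d].

Definition coord_lt i x y := (coord_key i x < coord_key i y)%O.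
Definition coord_le i x y := (coord_key i x <= coord_key i y)%O.

Lemma coord_key_inj i : injective (coord_key i).
Proof.
move=> x y [_ /eq_in_map exy]; apply/rowP => j.
by apply: exy; rewrite mem_enum.
Qed.

Lemma coord_lt_irr i : irreflexive (coord_lt i).
Proof. by move=> x; apply: ltxx. Qed.

Lemma coord_lt_trans i : transitive (coord_lt i).
Proof. by move=> y x z; apply: lt_trans. Qed.

Lemma coord_lt_asym i x y : coord_lt i x y -> ~~ coord_lt i y x.
Proof. by rewrite /coord_lt => /lt_gtF ->. Qed.

Lemma coord_lt_total i x y : x != y -> coord_lt i x y || coord_lt i y x.
Proof. by move=> xy; apply: lt_total; rewrite (inj_eq (@coord_key_inj i)). Qed.

Lemma coord_lt_le i x y : coord_lt i x y -> x 0 i <= y 0 i.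
Proof. by rewrite /coord_lt ltxi_cons => /andP[]. Qed.

Lemma coord_lt_leW i x y : coord_lt i x y -> coord_le i x y.
Proof. exact: ltW. Qed.

Lemma coord_le_total i : total (coord_le i).
Proof. by move=> x y; apply: le_total. Qed.

Lemma coord_le_trans i : transitive (coord_le i).
Proof. by move=> y x z; apply: le_trans. Qed.

Lemma coord_le_anti i : antisymmetric (coord_le i).
Proof. by move=> x y /le_anti/coord_key_inj. Qed.

Lemma coord_le_lt_trans i x y z :
  coord_le i x y -> coord_lt i y z -> coord_lt i x z.
Proof. exact: le_lt_trans. Qed.

Lemma sort_coord_le_sorted i (s : seq 'rV[R]_d) :
  uniq s -> sorted (coord_lt i) (sort (coord_le i) s).
Proof.
by rewrite -(map_inj_uniq (@coord_key_inj i)) -sort_lt_sorted sort_map sorted_map.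
Qed.

End CoordinateOrders.

Section OrthantOrders.
Variables (R : realType) (n : nat).
Local Open Scope ring_scope.
Implicit Types (x y p q r : 'rV[R]_n.+1) (s : {ffun 'I_n -> bool}).

Definition orth_dir s (i : 'I_n.+1) : bool :=
  if unlift ord0 i is Some j then s j else true.

Definition orth_lt s x y :=
  [forall i, if orth_dir s i then coord_lt i x y else coord_lt i y x].

Definition orthant x y : {ffun 'I_n -> bool} :=
  [ffun j => coord_lt (lift ord0 j) x y].

Lemma orth_dir0 s : orth_dir s ord0.
Proof. by rewrite /orth_dir unlift_none. Qed.

Lemma orth_dir_lift s j : orth_dir s (lift ord0 j) = s j.
Proof. by rewrite /orth_dir liftK. Qed.

Lemma orth_lt_irr s : irreflexive (orth_lt s).
Proof.
by move=> x; apply/negP => /forallP/(_ ord0); rewrite orth_dir0 coord_lt_irr.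
Qed.

Lemma orth_lt_trans s : transitive (orth_lt s).
Proof.
move=> y x z /forallP lxy /forallP lyz; apply/forallP => i.
move: (lxy i) (lyz i); case: (orth_dir s i) => h1 h2.
  exact: coord_lt_trans h1 h2.
exact: coord_lt_trans h2 h1.
Qed.

Lemma orth_lt_coord0 s x y : orth_lt s x y -> coord_lt ord0 x y.
Proof. by move/forallP/(_ ord0); rewrite orth_dir0. Qed.

Lemma orth_lt_orthant x y :
  x != y -> coord_lt ord0 x y -> orth_lt (orthant x y) x y.
Proof.
move=> xy lxy0; apply/forallP => i; case: (unliftP ord0 i) => [j ->|->].
  rewrite orth_dir_lift ffunE; case: ifP => // /negbT nlxy.
  by have := coord_lt_total (lift ord0 j) xy; rewrite (negbTE nlxy).
by rewrite orth_dir0.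
Qed.

Lemma orthantE s x y : orth_lt s x y -> orthant x y = s.
Proof.
move=> /forallP lxy; apply/ffunP => j; rewrite ffunE.
have := lxy (lift ord0 j); rewrite orth_dir_lift.
by case: (s j) => // /coord_lt_asym/negbTE.
Qed.

Lemma orth_comparable x y : x != y ->
  exists s, orth_lt s x y || orth_lt s y x.
Proof.
move=> xy; have /orP[l|l] := coord_lt_total ord0 xy.
  by exists (orthant x y); rewrite orth_lt_orthant.
by exists (orthant y x); rewrite orth_lt_orthant ?orbT // eq_sym.
Qed.

Lemma orth_lt_between s p r q i : orth_lt s p r -> orth_lt s r q ->
  (p 0 i <= r 0 i <= q 0 i) || (q 0 i <= r 0 i <= p 0 i).
Proof.
move=> /forallP/(_ i) lpr /forallP/(_ i) lrq.
by case: (orth_dir s i) lpr lrq => /coord_lt_le -> /coord_lt_le ->; rewrite ?orbT.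
Qed.

Lemma in_box_orth_between s H p r q : orth_lt s p r -> orth_lt s r q ->
  in_box H p -> in_box H q -> in_box H r.
Proof.
move=> lpr lrq /allP Hp /allP Hq; apply/allP => [[[i beta] []]] hH;
  move: (Hp _ hH) (Hq _ hH); rewrite /halfspace;
  case/orP: (orth_lt_between i lpr lrq) => /andP[pr rq] hp hq.
- exact: le_trans rq hq.
- exact: le_trans rq hp.
- exact: le_trans hp pr.
- exact: le_trans hq pr.
Qed.

Lemma orthant_long_chain k (B : seq 'rV[R]_n.+1) :
  uniq B -> (k ^ 2 ^ n < size B)%N ->
  exists s c, [/\ sorted (orth_lt s) c, {subset c <= B} & (k < size c)%N].
Proof.
move=> uB bigB; pose os := enum {ffun 'I_n -> bool}.
apply: (exists_long_chain (os := os) (@orth_lt_irr) (@orth_lt_trans) uB).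
  move=> x y _ _ /orth_comparable[s ls]; apply/hasP; exists s => //.
  by rewrite mem_enum.
by rewrite -cardE card_ffun card_bool card_ord.
Qed.

End OrthantOrders.

Lemma box_pointsE (R : realType) d H (S : {fset 'rV[R]_d}) x :
  (x \in box_points H S) = (x \in S) && in_box H x.
Proof. by rewrite !inE. Qed.

Section Coloring.
Variables (R : realType) (n k : nat) (S : {fset 'rV[R]_n.+1}).
Local Open Scope fset_scope.
Implicit Types (x y z p : 'rV[R]_n.+1) (s : {ffun 'I_n -> bool}).

Definition upset s p := [seq r <- enum_fset S | (r == p) || orth_lt s p r].

(* (height x).-2 is the largest number of points of S strictly between p and x
   on a chain of the orthant order of (p, x). *)
Definition pair_color p x : 'I_k.+1 :=
  let s := orthant p x in inord ((height (orth_lt s) (upset s p) x).-2 %% k.+1).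

Definition tuple_color (T : {fset 'rV[R]_n.+1}) : 'I_k.+1 :=
  let c := sort (coord_le ord0) T in pair_color (nth 0%R c 0) (nth 0%R c 1).

Lemma height_upset_root s p : height (orth_lt s) (upset s p) p = 1.
Proof.
apply: (height_min (@orth_lt_irr _ _ s) (@orth_lt_trans _ _ s)) => y.
rewrite mem_filter => /andP[/predU1P[->|lpy] _]; first by rewrite orth_lt_irr.
by apply/negP => /(orth_lt_trans lpy); rewrite orth_lt_irr.
Qed.

Lemma sort_seq_fset (c : seq 'rV[R]_n.+1) : sorted (coord_lt ord0) c ->
  sort (coord_le ord0) (seq_fset tt c) = c.
Proof.
move=> sc; have uc := sorted_uniq (@coord_lt_trans _ _ _) (@coord_lt_irr _ _ _) sc.
rewrite -[RHS](sorted_sort (@coord_le_trans _ _ ord0)); last first.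
  exact: sub_sorted (@coord_lt_leW _ _ ord0) _ sc.
apply/perm_sortP; [exact: coord_le_total | exact: coord_le_trans |
  exact: coord_le_anti |].
by apply: uniq_perm; rewrite ?fset_uniq // => x; rewrite seq_fsetE.
Qed.

Lemma tuple_color_sorted p z U : sorted (coord_lt ord0) [:: p, z & U] ->
  tuple_color (seq_fset tt [:: p, z & U]) = pair_color p z.
Proof. by move=> sc; rewrite /tuple_color sort_seq_fset. Qed.

Lemma chain_pair_color H s p c (i : 'I_k.+1) :
  path (orth_lt s) p c -> {subset p :: c <= box_points H S} -> k < size c ->
  exists z, [/\ z \in box_points H S, orth_lt s p z, pair_color p z = i
    & (z == last p c) || orth_lt s z (last p c)].
Proof.
move=> pc cbox kc; set A := upset s p.
have irr := @orth_lt_irr R n s; have tr := @orth_lt_trans R n s.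
have cA : {subset p :: c <= A}.
  move=> x xc; have /cbox := xc; rewrite mem_filter box_pointsE => /andP[-> _].
  case/predU1P: xc => [->|xc]; first by rewrite eqxx.
  by rewrite (allP (order_path_min tr pc)) ?orbT.
have hy : i.+2 <= height (orth_lt s) A (last p c).
  have := height_path irr tr pc cA; rewrite height_upset_root add1n.
  by apply: leq_trans; rewrite ltnS (leq_trans (ltn_ord i) kc).
have [z hz zy] := height_down irr tr (ltn0Sn i.+1) hy.
have zA : z \in A by case/predU1P: zy => [->|/andP[]//]; apply: cA; apply: mem_last.
have lpz : orth_lt s p z.
  move: zA; rewrite mem_filter => /andP[/predU1P[zp|//] _].
  by move: hz; rewrite zp height_upset_root.
exists z; split => //.
- rewrite box_pointsE; move: zA; rewrite mem_filter => /andP[_ ->] /=.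
  have /cbox := mem_last p c; rewrite box_pointsE => /andP[_ ybox].
  case/predU1P: zy => [->//|/andP[_ lzy]].
  have /cbox := mem_head p c; rewrite box_pointsE => /andP[_ pbox].
  exact: in_box_orth_between lpz lzy pbox ybox.
- by rewrite /pair_color (orthantE lpz) hz /= modn_small ?inord_val.
- by case/predU1P: zy => [->|/andP[_ ->]]; rewrite ?eqxx ?orbT.
Qed.

Lemma box_tuple_color H t (L : seq 'rV[R]_n.+1) (i : 'I_k.+1) : 1 < t ->
  sorted (coord_lt ord0) L -> {subset L <= box_points H S} ->
  k.+1 ^ 2 ^ n + t - 1 <= size L ->
  exists T, [/\ T `<=` box_points H S, #|` T| = t & tuple_color T = i].
Proof.
move=> t1 sL Lbox bigL; have tr := @coord_lt_trans R n.+1 ord0.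
have := sL; rewrite -(cat_take_drop (size L - (t - 2)) L) (sorted_pairwise tr).
rewrite pairwise_cat; set P := take _ L; set U := drop _ L => /and3P[PU pP pU].
have sizeP : k.+1 ^ 2 ^ n < size P by rewrite size_takel ?leq_subr //; lia.
have sizeU : size U = t - 2 by rewrite size_drop; lia.
have uP := pairwise_uniq (@coord_lt_irr _ _ _) pP.
have [s [[|p c] [/= pc cP kc]]] := orthant_long_chain uP sizeP; first by [].
have cbox : {subset p :: c <= box_points H S}.
  by move=> x /cP/mem_take/Lbox.
have [z [zbox lpz zi zy]] := chain_pair_color i pc cbox kc.
have zU : all (coord_lt ord0 z) U.
  apply/allP => u uU; have yP : last p c \in P by apply: cP; apply: mem_last.
  have := allrelP PU _ _ yP uU; apply: coord_le_lt_trans.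
  by case/predU1P: zy => [->|/orth_lt_coord0/coord_lt_leW //]; apply: lexx.
have sT : sorted (coord_lt ord0) [:: p, z & U].
  by rewrite /= (orth_lt_coord0 lpz) (path_sortedE tr) zU (pairwise_sorted pU).
exists (seq_fset tt [:: p, z & U]); split.
- apply/fsubsetP => x; rewrite seq_fsetE !in_cons => /or3P[/eqP->|/eqP->|xU] //.
    by apply: cbox; apply: mem_head.
  exact/Lbox/(mem_drop xU).
- have uT := sorted_uniq tr (@coord_lt_irr _ _ _) sT.
  by rewrite size_seq_fset undup_id //= sizeU -add2n subnKC.
- by rewrite tuple_color_sorted.
Qed.

End Coloring.

Local Open Scope fset_scope.

Theorem theorem8 (R : realType) (t d k : nat) :
  (2 <= t)%N -> (0 < d)%N -> (0 < k)%N ->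
  exists m : nat, (m <= k ^ (2 ^ (d - 1)) + t - 1)%N /\
    forall S : {fset 'rV[R]_d},
    exists c : {fset 'rV[R]_d} -> 'I_k,
      forall H : seq ('I_d * R * bool),
        (m <= #|` box_points H S|)%N ->
        forall i : 'I_k,
          exists T : {fset 'rV[R]_d},
            [/\ T `<=` box_points H S, #|` T| = t & c T = i].
Proof.
move=> t2 d0 k0; case: d d0 => // n _; case: k k0 => // k _.
exists (k.+1 ^ 2 ^ n + t - 1); split; first by rewrite subSS subn0.
move=> S; exists (tuple_color k S) => H hm i.
apply: (box_tuple_color (L := sort (coord_le ord0) (box_points H S))) => //.
- exact/sort_coord_le_sorted/fset_uniq.
- by move=> x; rewrite mem_sort.
- by rewrite size_sort.
Qed.
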